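(* Let $G$ be a countable discrete group, $m$ a probability measure on $G$, $(X,\mu)$ a standard probability space, and $a,b \in \mathrm{Stat}(G,m,X,\mu)$. Then the following are equivalent. (i) $a \preceq b$. (ii) For every finite subset $F \subseteq G$, every $\epsilon > 0$ and every finite collection $A_1,\ldots,A_n$ of measurable subsets of $X$, there exist measurable subsets $B_1,\ldots,B_n$ of $X$ such that \[ \left| \mu(g^a A_i \cap h^a A_j) - \mu(g^b B_i \cap h^b B_j) \right| < \epsilon \] for all $g,h \in F$ and all $i,j \in \{1,\ldots,n\}$.
   Context: A measurable action $a$ of $G$ on $(X,\mu)$ is $m$-stationary if $\sum_{g\in G} m(g)\,\mu(g^aA)=\mu(A)$ for every measurable $A\subseteq X$, where $g^a$ denotes the (nonsingular) transformation of $X$ by which $g$ acts in $a$. $\mathrm{Stat}(G,m,X,\mu)$ is the set of $m$-stationary actions of $G$ on $(X,\mu)$. For $a,b\in\mathrm{Stat}(G,m,X,\mu)$, $a$ is weakly contained in $b$ ($a\preceq b$) if for every $\epsilon>0$, every finite $F\subseteq G$ and every finite collection $A_1,\ldots,A_n$ of measurable subsets of $X$ there are measurable $B_1,\ldots,B_n\subseteq X$ with $|\mu(g^aA_i\cap A_j)-\mu(g^bB_i\cap B_j)|<\epsilon$ for all $g\in F$ and $i,j\in\{1,\ldots,n\}$. *)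

From HB Require Import structures.
From mathcomp Require Import all_boot all_order all_algebra.
From mathcomp Require Import monoid.
From mathcomp Require Import all_classical all_reals all_analysis.
Set Implicit Arguments. Unset Strict Implicit. Unset Printing Implicit Defensive.
Import Order.TTheory GRing.Theory Num.Theory.
Local Open Scope classical_set_scope.
Local Open Scope ring_scope.

Section Defs.
Context (R : realType).

(* A standard Borel space: Borel-isomorphic to a Borel subset of the reals
   (Kuratowski); [f] is a measurable injection with measurable images
   (hence a Borel isomorphism onto its range, which is a Borel set). *)
Definition standard_borel d (X : measurableType d) : Prop :=
  exists f : X -> R,
    [/\ injective f, measurable (range f), measurable_fun setT f &
        forall A : set X, measurable A -> measurable (f @` A)].

Context (G : groupType).

Definition prob_on (m : G -> R) : Prop :=
  (forall g, 0 <= m g) /\ (\esum_(g in [set: G]) (m g)%:E = 1%E).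

Context d (X : measurableType d) (mu : probability X R).

(* measurable, nonsingular action of G on (X, mu); g^a = a g *)
Definition measurable_nonsingular_action (a : G -> X -> X) : Prop :=
  [/\ (forall x, a 1%g x = x),
      (forall g h x, a (g * h)%g x = a g (a h x)),
      (forall g, measurable_fun setT (a g)) &
      (forall g (A : set X), measurable A ->
         (mu A = 0%E <-> mu (a g @` A) = 0%E))].

Definition stationary (m : G -> R) (a : G -> X -> X) : Prop :=
  forall A : set X, measurable A ->
    (\esum_(g in [set: G]) ((m g)%:E * mu (a g @` A)))%E = mu A.

Definition Stat (m : G -> R) (a : G -> X -> X) : Prop :=
  measurable_nonsingular_action a /\ stationary m a.

Definition weakly_contained (a b : G -> X -> X) : Prop :=
  forall (eps : R), 0 < eps -> forall (F : set G), finite_set F ->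
  forall (n : nat) (A : 'I_n -> set X), (forall i, measurable (A i)) ->
  exists B : 'I_n -> set X, (forall i, measurable (B i)) /\
    forall g, F g -> forall i j : 'I_n,
      `| fine (mu (a g @` A i `&` A j)) - fine (mu (b g @` B i `&` B j)) | < eps.

Definition weakly_contained2 (a b : G -> X -> X) : Prop :=
  forall (F : set G), finite_set F -> forall (eps : R), 0 < eps ->
  forall (n : nat) (A : 'I_n -> set X), (forall i, measurable (A i)) ->
  exists B : 'I_n -> set X, (forall i, measurable (B i)) /\
    forall g h, F g -> F h -> forall i j : 'I_n,
      `| fine (mu (a g @` A i `&` a h @` A j))
         - fine (mu (b g @` B i `&` b h @` B j)) | < eps.

End Defs.

From HB Require Import structures.
From mathcomp Require Import all_boot all_order all_algebra.
From mathcomp Require Import monoid.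
From mathcomp Require Import all_classical all_reals all_analysis.
From mathcomp Require Import finmap lra.

(* (ii) => (i) is the case h = 1.  For (i) => (ii), apply weak containment to
   the enlarged collection of all h^a A_j (h in F or h = 1) together with X,
   obtaining sets D_{h,j} that mimic h^a A_j.  Comparing the pairs
   (1^a A_j, h^a A_j), (h^a A_j, h^a A_j), (1^a A_j, X) and (X, X) shows that
   D_{h,j} and h^b B_j have almost the same measure and almost all of it in
   common, so mu (g^b B_i \cap h^b B_j) is close to
   mu (g^b B_i \cap D_{h,j}), itself close to mu (g^a A_i \cap h^a A_j). *)

Set Implicit Arguments. Unset Strict Implicit.
Import Order.TTheory GRing.Theory Num.Theory.
Local Open Scope classical_set_scope.
Local Open Scope ring_scope.

Section FineMeasure.
Context (R : realType) d (X : measurableType d).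

Section FiniteMeasure.
Variable mu : {finite_measure set X -> \bar R}.

Lemma fine_measure_setIC (A S : set X) : measurable A -> measurable S ->
  fine (mu A) = fine (mu (A `&` S)) + fine (mu (A `&` ~` S)).
Proof.
move=> mA mS; rewrite (measureDI mu mA mS) fineD ?fin_num_measure //.
- by rewrite addrC setDE.
- exact: measurableD.
- exact: measurableI.
Qed.

Lemma fine_measure_le (A B : set X) : measurable A -> measurable B ->
  A `<=` B -> fine (mu A) <= fine (mu B).
Proof.
move=> mA mB AB; apply: fine_le; rewrite ?fin_num_measure //.
by apply: le_measure => //; exact/mem_set.
Qed.

Lemma fine_measure_setI_subr_le (P D H : set X) :
  measurable P -> measurable D -> measurable H ->
  fine (mu (P `&` D)) - fine (mu (P `&` H)) <=
  fine (mu D) - fine (mu (D `&` H)).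
Proof.
move=> mP mD mH.
have mPD := measurableI _ _ mP mD.
have mDH' := measurableI _ _ mD (measurableC mH).
rewrite (fine_measure_setIC mPD mH) [in X in _ <= X](fine_measure_setIC mD mH).
have PDH_sub : P `&` D `&` H `<=` P `&` H by move=> x [[]].
have PDH'_sub : P `&` D `&` ~` H `<=` D `&` ~` H by move=> x [[]].
have := fine_measure_le (measurableI _ _ mPD mH) (measurableI _ _ mP mH) PDH_sub.
have := fine_measure_le (measurableI _ _ mPD (measurableC mH)) mDH' PDH'_sub.
lra.
Qed.

End FiniteMeasure.

Variable mu : probability X R.

Lemma fine_probability_le_setI (H S : set X) : measurable H -> measurable S ->
  fine (mu H) <= fine (mu (H `&` S)) + (1 - fine (mu S)).
Proof.
move=> mH mS; rewrite (fine_measure_setIC mu mH mS) lerD2l.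
have -> : 1 - fine (mu S) = fine (mu (~` S)).
  by rewrite probability_setC // fineB ?fin_num_measure.
exact: fine_measure_le (measurableI _ _ mH (measurableC mS)) (measurableC mS)
  (@subIsetr _ _ _).
Qed.

(* D and H both have measure about y and meet in measure about y, so they are
   indistinguishable by intersection with P; the measure of H itself is only
   known through its intersection with the almost full set S. *)
Lemma fine_probability_setI_approx (P D H S : set X) (x y e : R) :
  measurable P -> measurable D -> measurable H -> measurable S ->
  `|x - fine (mu (P `&` D))| < e ->
  `|y - fine (mu D)| < e -> `|y - fine (mu (H `&` D))| < e ->
  `|y - fine (mu (H `&` S))| < e -> `|1 - fine (mu S)| < e ->
  `|x - fine (mu (P `&` H))| < 4 * e.
Proof.
move=> mP mD mH mS.
have := fine_measure_setI_subr_le mu mP mD mH.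
have := fine_measure_setI_subr_le mu mP mH mD.
have := fine_probability_le_setI mH mS.
rewrite [D `&` H]setIC !ltr_norml.
move=> ? ? ? /andP[? ?] /andP[? ?] /andP[? ?] /andP[? ?] /andP[? ?].
apply/andP; split; lra.
Qed.

End FineMeasure.

Section Action.
Context (G : groupType) d (X : measurableType d) (a : G -> X -> X).
Hypotheses (act1 : forall x, a 1%g x = x)
  (actM : forall g h x, a (g * h)%g x = a g (a h x)).

Lemma image_act1 (A : set X) : a 1%g @` A = A.
Proof.
apply/seteqP; split => [x [y Ay <-]|x Ax]; first by rewrite act1.
by exists x; rewrite ?act1.
Qed.

Lemma image_act_preimage g (A : set X) : a g @` A = a g^-1%g @^-1` A.
Proof.
apply/seteqP; split => [x [y Ay <-]|x Ax] /=; first by rewrite -actM mulVg act1.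
by exists (a g^-1%g x); rewrite // -actM mulgV act1.
Qed.

Lemma measurable_image_act g (A : set X) :
  (forall k, measurable_fun setT (a k)) -> measurable A -> measurable (a g @` A).
Proof.
move=> ma mA; rewrite image_act_preimage.
by have := ma g^-1%g measurableT A mA; rewrite setTI.
Qed.

End Action.

Section WeakContainment.
Context (R : realType) (G : groupType) d (X : measurableType d)
  (mu : probability X R).
Implicit Types a b : G -> X -> X.

Lemma weakly_contained_finType a b : weakly_contained mu a b ->
  forall eps : R, 0 < eps -> forall F : set G, finite_set F ->
  forall (I : finType) (A : I -> set X), (forall i, measurable (A i)) ->
  exists B : I -> set X, (forall i, measurable (B i)) /\
    forall g, F g -> forall i j : I,
      `| fine (mu (a g @` A i `&` A j)) - fine (mu (b g @` B i `&` B j)) | < eps.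
Proof.
move=> wab eps eps0 F fF I A mA.
have [B [mB HB]] := wab eps eps0 F fF #|I| (A \o enum_val) (fun i => mA _).
exists (B \o enum_rank); split => [i|g Fg i j]; first exact: mB.
by have := HB g Fg (enum_rank i) (enum_rank j); rewrite /= !enum_rankK.
Qed.

Lemma weakly_contained2_weakly_contained a b :
  (forall x, a 1%g x = x) -> (forall x, b 1%g x = x) ->
  weakly_contained2 mu a b -> weakly_contained mu a b.
Proof.
move=> a1 b1 wab eps eps0 F fF n A mA.
have fF1 : finite_set (F `|` [set 1%g]) by rewrite finite_setU; split.
have [B [mB HB]] := wab _ fF1 eps eps0 n A mA.
exists B; split => // g Fg i j.
by have := HB g 1%g (or_introl Fg) (or_intror erefl) i j; rewrite !image_act1.
Qed.

Lemma weakly_contained_weakly_contained2 a b :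
  measurable_nonsingular_action mu a -> measurable_nonsingular_action mu b ->
  weakly_contained mu a b -> weakly_contained2 mu a b.
Proof.
move=> [a1 aM ma _] [b1 bM mb _] wab F fF eps eps0 n A mA.
have [Y0 FY0] := finite_fsetP.1 fF.
pose Y := (1%g |` Y0)%fset.
have Y1 : 1%g \in Y by exact: fset1U1.
have FY h : F h -> h \in Y by rewrite FY0 => hY0; exact: fset1Ur.
pose C (o : option (Y * 'I_n)) : set X :=
  if o is Some (h, j) then a (val h) @` A j else setT.
have mC o : measurable (C o).
  by case: o => [[h j]|]; [exact: measurable_image_act | exact: measurableT].
have eps4 : 0 < eps / 4 by rewrite divr_gt0.
have [D [mD HD]] := weakly_contained_finType wab eps4 (finite_fset Y) mC.
exists (fun i => D (Some (FSetSub Y1, i))); split => [i|g h Fg Fh i j].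
  exact: mD.
pose hj := Some (FSetSub (FY h Fh), j).
have := HD 1%g Y1 None None.
have := HD h (FY h Fh) (Some (FSetSub Y1, j)) None.
have := HD h (FY h Fh) (Some (FSetSub Y1, j)) hj.
have := HD 1%g Y1 hj hj.
have := HD g (FY g Fg) (Some (FSetSub Y1, i)) hj.
rewrite /= !image_act1 // setIT !setIid probability_setT /=.
move=> w1 w2 w3 w4 w5.
have -> : eps = 4 * (eps / 4) by rewrite mulrC divfK.
exact: (fine_probability_setI_approx (measurable_image_act b1 bM _ mb (mD _))
  (mD _) (measurable_image_act b1 bM _ mb (mD _)) (mD _) w1 w2 w3 w4 w5).
Qed.

End WeakContainment.

Theorem mainTheorem1 (R : realType) (G : groupType) (m : G -> R)
  (d : measure_display) (X : measurableType d) (mu : probability X R)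
  (a b : G -> X -> X) :
  countable [set: G] ->
  prob_on m ->
  standard_borel R X ->
  Stat mu m a -> Stat mu m b ->
  (weakly_contained mu a b <-> weakly_contained2 mu a b).
Proof.
move=> _ _ _ [act_a _] [act_b _]; split.
  exact: weakly_contained_weakly_contained2.
case: act_a act_b => a1 _ _ _ [b1 _ _ _].
exact: weakly_contained2_weakly_contained.
Qed.
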